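(* For every subgroup $\Gamma\neq\{\widetilde o\}$ of $Z_{\widetilde M}(\widetilde K)$, $$i(P_\Gamma)=\min\Big\{(\psi,\psi)^{-1/2},\ \tfrac12(e_j,e_j)^{1/2}\ :\ \widetilde{\mathrm{Exp}}(\pi\sqrt{-1}e_j)\in\Gamma\Big\}.$$
   Context: Let $(\mathfrak u,\theta,\langle,\rangle)$ be a reduced, compact, irreducible orthogonal involutive Lie algebra ($\mathfrak u=\mathfrak k_0\oplus\mathfrak p_*$ the $\pm1$ eigenspaces of $\theta$), $\widetilde U$ the simply connected group of $\mathfrak u$, $\widetilde K$ the fixed group of the induced involution, $\widetilde M=\widetilde U/\widetilde K$, $\widetilde o=\widetilde e\widetilde K$, $\widetilde{\mathrm{Exp}}(X)=\widetilde\exp(X)\widetilde K$ ($X\in\mathfrak p_*$), and $Z_{\widetilde M}(\widetilde K)$ the group of points of $\widetilde M$ fixed by all left translations by $\widetilde K$. $(\cdot,\cdot)$ is the Killing form of $\mathfrak u\otimes\mathbb C$, positive definite on $\mathfrak h_{\mathfrak p_0}=\sqrt{-1}\mathfrak h_{\mathfrak p_*}$ ($\mathfrak h_{\mathfrak p_*}$ maximal abelian in $\mathfrak p_*$); $\Sigma\subset\mathfrak h_{\mathfrak p_0}$ the restricted root system with simple roots $\gamma_1,\dots,\gamma_l$, highest root $\psi=\sum d_i\gamma_i$; $e_j$ defined by $(e_j,\gamma_i)=\delta_{ij}/d_j$; $\triangle=\{x:(x,\gamma_i)\ge0\ \forall i,\ (x,\psi)\le1\}$. $P_\Gamma=\{x\in\triangle:(x,e_i)\le\frac12(e_i,e_i)$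 for all $i$ with $\widetilde{\mathrm{Exp}}(\pi\sqrt{-1}e_i)\in\Gamma\}$; $P'_\Gamma=\{x\in P_\Gamma:(x,\psi)=1$ or $(x,e_j)=\frac12(e_j,e_j)$ for some $j$ with $\widetilde{\mathrm{Exp}}(\pi\sqrt{-1}e_j)\in\Gamma\}$; $i(P_\Gamma)=\min_{x\in P'_\Gamma}(x,x)^{1/2}$ and $d(P_\Gamma)=\max_{x\in P_\Gamma}(x,x)^{1/2}$. *)

From mathcomp Require Import all_boot all_order all_algebra.
Set Implicit Arguments. Unset Strict Implicit. Unset Printing Implicit Defensive.
Import Order.TTheory GRing.Theory Num.Theory.
Local Open Scope ring_scope.

(* The Euclidean space (h_p0, Killing form) is modelled as 'rV[R]_l with the
   standard inner product (any finite-dim. inner product space is isometric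
   to this). *)
Definition dot (R : rcfType) (l : nat) (u v : 'rV[R]_l) : R :=
  \sum_(k < l) u 0 k * v 0 k.

Definition refl (R : rcfType) (l : nat) (a x : 'rV[R]_l) : 'rV[R]_l :=
  x - ((2 * dot x a) / dot a a) *: a.

(* Crystallographic (possibly non-reduced) root system spanning 'rV_l. *)
Definition is_root_system (R : rcfType) (l : nat) (S : seq 'rV[R]_l) : Prop :=
  [/\ 0 \notin S,
      (forall x : 'rV[R]_l, exists c : nat -> R,
          x = \sum_(k < size S) c k *: S`_k),
      (forall a b, a \in S -> b \in S -> refl a b \in S) &
      (forall a b, a \in S -> b \in S ->
          exists z : int, 2 * dot a b / dot b b = z%:~R)].

Definition irreducible_rs (R : rcfType) (l : nat) (S : seq 'rV[R]_l) : Prop :=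
  forall P : pred 'rV[R]_l,
    (forall a b, a \in S -> b \in S -> P a -> ~~ P b -> dot a b = 0) ->
    all P S \/ all (predC P) S.

Definition is_base (R : rcfType) (l : nat) (S : seq 'rV[R]_l)
  (gamma : 'I_l -> 'rV[R]_l) : Prop :=
  [/\ (forall i, gamma i \in S),
      (forall c : 'I_l -> R, \sum_i c i *: gamma i = 0 -> forall i, c i = 0) &
      (forall b, b \in S -> exists k : 'I_l -> nat,
          b = \sum_i (k i)%:R *: gamma i \/ b = - \sum_i (k i)%:R *: gamma i)].

Definition is_highest_root (R : rcfType) (l : nat) (S : seq 'rV[R]_l)
  (gamma : 'I_l -> 'rV[R]_l) (psi : 'rV[R]_l) : Prop :=
  psi \in S /\
  forall b, b \in S -> exists k : 'I_l -> nat, psi - b = \sum_i (k i)%:R *: gamma i.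

Definition alcove (R : rcfType) (l : nat) (gamma : 'I_l -> 'rV[R]_l)
  (psi x : 'rV[R]_l) : Prop :=
  (forall i, 0 <= dot x (gamma i)) /\ dot x psi <= 1.

(* P_Gamma, where J j <-> Exp(pi sqrt(-1) e_j) \in Gamma *)
Definition PG (R : rcfType) (l : nat) (gamma e : 'I_l -> 'rV[R]_l)
  (psi : 'rV[R]_l) (J : pred 'I_l) (x : 'rV[R]_l) : Prop :=
  alcove gamma psi x /\
  forall i, J i -> dot x (e i) <= dot (e i) (e i) / 2.

Definition PG' (R : rcfType) (l : nat) (gamma e : 'I_l -> 'rV[R]_l)
  (psi : 'rV[R]_l) (J : pred 'I_l) (x : 'rV[R]_l) : Prop :=
  PG gamma e psi J x /\
  (dot x psi = 1 \/ exists j, J j /\ dot x (e j) = dot (e j) (e j) / 2).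

Definition is_min_norm (R : rcfType) (l : nat) (A : 'rV[R]_l -> Prop) (m : R)
  : Prop :=
  (exists x, A x /\ Num.sqrt (dot x x) = m) /\
  (forall x, A x -> m <= Num.sqrt (dot x x)).

(* A point of P'_Gamma lies on the wall (x, psi) = 1 or on a wall
   (x, e_j) = (e_j, e_j)/2 with j in J, and Cauchy-Schwarz bounds its length
   from below by |psi|^-1, resp. |e_j|/2.  Conversely the foot of the
   perpendicular from the origin to the closest such wall, psi/(psi,psi) or
   e_j/2, lies in P'_Gamma: it is in the alcove because the highest root is
   dominant and the e_j lie in the closed Weyl chamber, and it satisfies the
   other constraints (x, e_i) <= (e_i, e_i)/2 because its length is at most
   |e_i|/2. *)
From mathcomp Require Import all_boot all_order all_algebra.
From mathcomp Require Import ring lra.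
Import Order.TTheory GRing.Theory Num.Theory.
Local Open Scope ring_scope.

Section DotProduct.
Context {R : rcfType} {l : nat}.
Implicit Types (u v w : 'rV[R]_l).

Lemma dotC u v : dot u v = dot v u.
Proof. by apply: eq_bigr => k _; rewrite mulrC. Qed.

Lemma dotZl a u v : dot (a *: u) v = a * dot u v.
Proof. by rewrite /dot mulr_sumr; apply: eq_bigr => k _; rewrite mxE mulrA. Qed.

Lemma dotZr a u v : dot u (a *: v) = a * dot u v.
Proof. by rewrite dotC dotZl dotC. Qed.

Lemma dotDl u v w : dot (u + v) w = dot u w + dot v w.
Proof. by rewrite /dot -big_split; apply: eq_bigr => k _; rewrite mxE mulrDl. Qed.

Lemma dotDr u v w : dot u (v + w) = dot u v + dot u w.
Proof. by rewrite dotC dotDl !(dotC u). Qed.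

Lemma dot0l v : dot 0 v = 0.
Proof. by rewrite /dot big1 // => k _; rewrite mxE mul0r. Qed.

Lemma dot_sumr (I : finType) u (c : I -> R) (g : I -> 'rV[R]_l) :
  dot u (\sum_i c i *: g i) = \sum_i c i * dot u (g i).
Proof.
rewrite dotC (big_morph (fun w => dot w u) (fun a b => dotDl a b u) (dot0l u)).
by apply: eq_bigr => i _; rewrite dotZl dotC.
Qed.

Lemma dot_ge0 u : 0 <= dot u u.
Proof. by apply: sumr_ge0 => k _; rewrite -expr2 sqr_ge0. Qed.

Lemma dot_eq0 u : (dot u u == 0) = (u == 0).
Proof.
apply/eqP/eqP => [u0|->]; last exact: dot0l.
apply/rowP => k; rewrite mxE.
have /eqP := psumr_eq0P (fun i _ => sqr_ge0 (u 0 i)) u0 (i := k) isT.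
by rewrite mulf_eq0 orbb => /eqP.
Qed.

Lemma dot_gt0 u : u != 0 -> 0 < dot u u.
Proof. by move=> u0; rewrite lt_def dot_eq0 u0 dot_ge0. Qed.

Lemma sqr_sqrt_dot u : Num.sqrt (dot u u) ^+ 2 = dot u u.
Proof. by rewrite sqr_sqrtr // dot_ge0. Qed.

Lemma sqrt_dotZ a u : 0 <= a ->
  Num.sqrt (dot (a *: u) (a *: u)) = a * Num.sqrt (dot u u).
Proof.
move=> a0; rewrite dotZl dotZr mulrA sqrtrM ?mulr_ge0 //.
by rewrite -expr2 sqrtr_sqr ger0_norm.
Qed.

Lemma sqrt_dot_normalize u : u != 0 ->
  Num.sqrt (dot ((dot u u)^-1 *: u) ((dot u u)^-1 *: u)) =
  (Num.sqrt (dot u u))^-1.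
Proof.
move=> u0; rewrite sqrt_dotZ ?invr_ge0 ?dot_ge0 // -[X in X^-1 * _]sqr_sqrt_dot.
by rewrite expr2 invfM -mulrA mulVf ?mulr1 // gt_eqF // sqrtr_gt0 dot_gt0.
Qed.

Lemma dot_cauchy_schwarz u v :
  dot u v <= Num.sqrt (dot u u) * Num.sqrt (dot v v).
Proof.
have [->|u0] := eqVneq u 0; first by rewrite dot0l mulr_ge0 ?sqrtr_ge0.
have [->|v0] := eqVneq v 0; first by rewrite dotC dot0l mulr_ge0 ?sqrtr_ge0.
set s := Num.sqrt (dot u u); set t := Num.sqrt (dot v v).
have st_pos : 0 < s * t by rewrite mulr_gt0 // sqrtr_gt0 dot_gt0.
(* 0 <= |t u - s v|^2 = 2 s t (s t - (u, v)) *)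
have := dot_ge0 (t *: u - s *: v).
have -> : dot (t *: u - s *: v) (t *: u - s *: v) =
    (2 * (s * t)) * (s * t - dot u v).
  rewrite dotDl !dotDr -!scaleNr !dotZl !dotZr (dotC v u).
  rewrite -(sqr_sqrt_dot u) -(sqr_sqrt_dot v) -/s -/t; ring.
by rewrite pmulr_rge0 ?subr_ge0 // mulr_gt0.
Qed.

Lemma inv_sqrt_dot_le_of_dot1 x v :
  dot x v = 1 -> (Num.sqrt (dot v v))^-1 <= Num.sqrt (dot x x).
Proof.
move=> xv; have := dot_cauchy_schwarz x v; rewrite xv => h.
have v0 : 0 < Num.sqrt (dot v v).
  by rewrite lt_def sqrtr_ge0 andbT; apply: contraTneq h => ->; rewrite mulr0 ler10.
by rewrite -(mul1r _^-1) ler_pdivrMr.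
Qed.

Lemma half_sqrt_dot_le_of_dot_half x v :
  dot x v = dot v v / 2 -> Num.sqrt (dot v v) / 2 <= Num.sqrt (dot x x).
Proof.
move=> xv; have := dot_cauchy_schwarz x v; rewrite xv -{1}sqr_sqrt_dot.
set t := Num.sqrt (dot v v); set s := Num.sqrt (dot x x).
have [->|t0 h] := eqVneq t 0; first by rewrite mul0r sqrtr_ge0.
have tpos : 0 < t by rewrite lt_def t0 sqrtr_ge0.
by rewrite -(ler_pM2r tpos) mulrAC -expr2.
Qed.

Lemma dot_le_half_of_sqrt_dot_le x v :
  Num.sqrt (dot x x) <= Num.sqrt (dot v v) / 2 -> dot x v <= dot v v / 2.
Proof.
move=> h; apply: le_trans (dot_cauchy_schwarz x v) _.
set t := Num.sqrt (dot v v) in h *; set s := Num.sqrt (dot x x) in h *.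
have [t0 s0] : 0 <= t /\ 0 <= s by split; apply: sqrtr_ge0.
rewrite -(sqr_sqrt_dot v) -/t; nra.
Qed.

End DotProduct.

Lemma bigmin_id_or_attained {R : realDomainType} {I : finType} (P : pred I)
    (F : I -> R) (x : R) :
  \big[Num.min/x]_(i | P i) F i = x \/
  exists2 j, P j & \big[Num.min/x]_(i | P i) F i = F j.
Proof.
apply: (big_rec (fun y => y = x \/ exists2 j, P j & y = F j)); first by left.
by move=> i y Pi IH; case: (leP (F i) y) => _; [right; exists i|].
Qed.

Section HighestRoot.
Context {R : rcfType} {l : nat} {S : seq 'rV[R]_l}.
Context {gamma : 'I_l -> 'rV[R]_l} {psi : 'rV[R]_l}.
Hypotheses (rsS : is_root_system S) (gammaB : is_base S gamma).

Lemma base_coef_of_scale (k : 'I_l -> nat) (c : R) i :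
  \sum_t (k t)%:R *: gamma t = c *: gamma i -> c = (k i)%:R.
Proof.
case: gammaB => _ gind _ hk.
have H0 : \sum_t ((k t)%:R - (t == i)%:R * c) *: gamma t = 0.
  under eq_bigr => t _ do rewrite scalerBl.
  rewrite big_split /= sumrN hk (bigD1 i) //= big1 => [|t /negbTE ->];
    last by rewrite mul0r scale0r.
  by rewrite eqxx mul1r addr0 subrr.
by have /eqP := gind _ H0 i; rewrite eqxx mul1r subr_eq0 => /eqP.
Qed.

(* psi - s_i psi = <psi, gamma_i^v> gamma_i is a nonnegative combination of
   simple roots because psi is highest. *)
Lemma highest_root_dominant i :
  is_highest_root S gamma psi -> 0 <= dot psi (gamma i).
Proof.
case: rsS => S0 _ Srefl _; case: gammaB => gS _ _ [psiS hr].
have gi_pos : 0 < dot (gamma i) (gamma i).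
  by apply: dot_gt0; apply: contraNneq S0 => <-.
set c := 2 * dot psi (gamma i) / dot (gamma i) (gamma i).
have [k] := hr _ (Srefl _ _ (gS i) psiS).
rewrite /refl -/c opprB addrC subrK => /esym/base_coef_of_scale ck.
have -> : dot psi (gamma i) = c * dot (gamma i) (gamma i) / 2.
  by rewrite /c divfK ?gt_eqF // mulrC mulrA mulVf ?mul1r ?pnatr_eq0.
by rewrite divr_ge0 // mulr_ge0 ?ck ?ler0n ?(ltW gi_pos).
Qed.

End HighestRoot.

Section ClosestWallPoints.
Context {R : rcfType} {l : nat}.
Context {gamma e : 'I_l -> 'rV[R]_l} {psi : 'rV[R]_l} {J : pred 'I_l}.

Lemma scaled_highest_root_in_PG' :
  psi != 0 -> (forall i, 0 <= dot psi (gamma i)) ->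
  (forall i, J i -> (Num.sqrt (dot psi psi))^-1 <= Num.sqrt (dot (e i) (e i)) / 2) ->
  PG' gamma e psi J ((dot psi psi)^-1 *: psi).
Proof.
move=> psi0 dom hJ; have psi_pos := dot_gt0 _ psi0.
have unit_psi : dot ((dot psi psi)^-1 *: psi) psi = 1.
  by rewrite dotZl mulVf ?gt_eqF.
split; [split; [split=> [i|] | move=> i Ji] | by left].
- by rewrite dotZl mulr_ge0 // invr_ge0 ltW.
- by rewrite unit_psi.
by apply: dot_le_half_of_sqrt_dot_le; rewrite sqrt_dot_normalize ?hJ.
Qed.

Lemma half_weight_in_PG' (d : 'I_l -> nat) j :
  psi = \sum_i (d i)%:R *: gamma i ->
  (forall i j, dot (e j) (gamma i) = (i == j)%:R / (d j)%:R) ->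
  J j ->
  (forall i, J i -> Num.sqrt (dot (e j) (e j)) <= Num.sqrt (dot (e i) (e i))) ->
  PG' gamma e psi J (2^-1 *: e j).
Proof.
move=> psiE eE Jj hJ.
split; [split; [split=> [i|] | move=> i Ji] | right; exists j].
- by rewrite dotZl eE mulr_ge0 ?invr_ge0 ?divr_ge0 ?ler0n.
- rewrite dotZl psiE dot_sumr (bigD1 j) //= big1 => [|i /negbTE ij];
    last by rewrite eE ij mul0r mulr0.
  rewrite eE eqxx mul1r addr0.
  have [->|dj] := eqVneq (d j) 0%N; first by rewrite mul0r mulr0.
  by rewrite mulfV ?pnatr_eq0 // mulr1; lra.
- apply: dot_le_half_of_sqrt_dot_le.
  by rewrite sqrt_dotZ ?invr_ge0 // mulrC ler_pM2r ?invr_gt0 ?hJ.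
- by rewrite dotZl mulrC.
Qed.

Lemma PG'_min_norm_le x :
  PG' gamma e psi J x ->
  \big[Num.min/(Num.sqrt (dot psi psi))^-1]_(j | J j)
      (Num.sqrt (dot (e j) (e j)) / 2) <= Num.sqrt (dot x x).
Proof.
move=> [_ [xpsi | [j [Jj xej]]]].
  exact: le_trans (bigmin_le_id _ _ _ _) (inv_sqrt_dot_le_of_dot1 _ _ xpsi).
exact: le_trans (bigmin_le_cond _ _ Jj) (half_sqrt_dot_le_of_dot_half _ _ xej).
Qed.

End ClosestWallPoints.

Theorem mainTheorem11 (R : rcfType) (l : nat) (S : seq 'rV[R]_l)
  (gamma : 'I_l -> 'rV[R]_l) (psi : 'rV[R]_l) (d : 'I_l -> nat)
  (e : 'I_l -> 'rV[R]_l) (J : pred 'I_l) :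
  is_root_system S -> irreducible_rs S -> is_base S gamma ->
  is_highest_root S gamma psi ->
  psi = \sum_i (d i)%:R *: gamma i ->
  (forall i j, dot (e j) (gamma i) = (i == j)%:R / (d j)%:R) ->
  is_min_norm (PG' gamma e psi J)
    (\big[Num.min/(Num.sqrt (dot psi psi))^-1]_(j | J j)
        (Num.sqrt (dot (e j) (e j)) / 2)).
Proof.
move=> rsS _ gammaB hr psiE eE.
have dom i := highest_root_dominant rsS gammaB i hr.
have psi0 : psi != 0 by case: rsS hr => S0 _ _ _ [psiS _]; apply: contraNneq S0 => <-.
set F := fun j => Num.sqrt (dot (e j) (e j)) / 2.
set m := \big[Num.min/_]_(j | J j) F j.
have m_le i : J i -> m <= F i by apply: bigmin_le_cond.
split; last exact: PG'_min_norm_le.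
case: (bigmin_id_or_attained J F (Num.sqrt (dot psi psi))^-1) => [mE|[j Jj mE]];
  rewrite -/m in mE.
  exists ((dot psi psi)^-1 *: psi); rewrite sqrt_dot_normalize // -mE.
  by split=> //; apply: scaled_highest_root_in_PG' => // i; rewrite -mE; apply: m_le.
exists (2^-1 *: e j); rewrite sqrt_dotZ ?invr_ge0 // mulrC mE.
split=> //; apply: half_weight_in_PG' psiE eE Jj _ => i Ji.
by have := m_le i Ji; rewrite mE /F ler_pM2r ?invr_gt0.
Qed.
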